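(* Let $\Gamma=\mathrm{Cay}(G,S)$ be a connected bipartite Cayley graph on a finite group $G$, and let $H$ be the part of this bipartite graph containing the identity $e$ (a normal subgroup of index $2$ in $G$, with $S\subseteq G\setminus H$). Let $G'=H\rtimes\langle c\rangle$ be some semidirect product of $H$ with a group $\langle c\rangle$ of order $2$ (so $c\notin H$, $c^2=e$). Fix $a\in G\setminus H$, let $T_a=Sa^{-1}\subseteq H$ and $S'=T_ac\subseteq G'$. If $S'=S'^{-1}$ in $G'$, then the Cayley graph $\mathrm{Cay}(G',S')$ is isomorphic to $\mathrm{Cay}(G,S)$.
   Context: For a finite group $G$ with identity $e$ and a subset $S\subseteq G\setminus\{e\}$ with $S=S^{-1}$, the Cayley graph $\mathrm{Cay}(G,S)$ has vertex set $G$, two vertices $a,b$ being adjacent iff $ab^{-1}\in S$. *)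

From mathcomp Require Import all_boot all_fingroup.
Set Implicit Arguments. Unset Strict Implicit. Unset Printing Implicit Defensive.
Local Open Scope group_scope.

Definition cay_rel (gT : finGroupType) (G S : {set gT}) : rel gT :=
  fun a b => [&& a \in G, b \in G & a * b^-1 \in S].

Definition is_cayley_set (gT : finGroupType) (G S : {set gT}) : Prop :=
  S \subset G :\ 1 /\ [set x^-1 | x in S] = S.

Definition graph_connected (gT : finType) (G : {set gT}) (e : rel gT) : Prop :=
  {in G &, forall a b, connect e a b}.

Definition bipartition (gT : finType) (G X : {set gT}) (e : rel gT) : Prop :=
  X \subset G /\ (forall a b, e a b -> (a \in X) != (b \in X)).

Definition cayley_isomorphic (gT gT' : finGroupType)
    (G S : {set gT}) (G' S' : {set gT'}) : Prop :=
  exists f : gT -> gT',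
    [/\ {in G &, injective f}, f @: G = G' &
        {in G &, forall a b, cay_rel G S a b = cay_rel G' S' (f a) (f b)}].

From mathcomp Require Import all_boot all_fingroup.
Set Implicit Arguments. Unset Strict Implicit. Unset Printing Implicit Defensive.
Local Open Scope group_scope.

(* Let Cay(G,S) be connected with bipartition side H (containing 1), and let
   G' = H' ><| <[c]> with #[c] = 2 and f : H -> H' an isomorphism.
   1. In a connected graph with a bipartition, every graph endomorphism either
      preserves or swaps the two sides.  Right translations are automorphisms
      of Cay(G,S), whence the parity rule  x y^-1 \in H <-> (x \in H = y \in H);
      so H <| G, G = H u Ha, and S is disjoint from H.
   2. Likewise G' = H' u H'c, H' <| G' and S' = f(Sa^-1)c is disjoint from H'.
   3. The "twist" map  u |-> f(a u a^-1)^c  on H  and  u |-> f(u a^-1) c  off H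
      is a bijection G -> G' sending H onto H'.  Edges inside a side do not
      exist in either graph, and for u \notin H, v \in H we compute
      twist u * (twist v)^-1 = f(u v^-1 a^-1) c, which lies in S' exactly
      when u v^-1 \in S; the remaining case follows by symmetry of S, S'. *)

Lemma bipartition_side_invariant (T : finType) (V X : {set T}) (e : rel T)
    (sigma : T -> T) :
  graph_connected V e -> bipartition V X e ->
  (forall x y, e x y -> e (sigma x) (sigma y)) ->
  {in V &, forall x y,
    ((x \in X) == (sigma x \in X)) = ((y \in X) == (sigma y \in X))}.
Proof.
move=> conn [_ bip] hom x y xV yV.
case/connectP: (conn x y xV yV) => p pth ->{y yV}.
elim: p x {xV} pth => [|z p IH] x //= /andP[exz pz]; rewrite -IH //.
move: (bip _ _ exz) (bip _ _ (hom _ _ exz)).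
by case: (x \in X); case: (z \in X); case: (sigma x \in X); case: (sigma z \in X).
Qed.

Lemma mem_inv_closed (gT : finGroupType) (S : {set gT}) (x : gT) :
  [set y^-1 | y in S] = S -> (x^-1 \in S) = (x \in S).
Proof. by move=> Sinv; rewrite -{1}Sinv mem_imset //; apply: invg_inj. Qed.

Lemma cay_relC (gT : finGroupType) (G S : {set gT}) (x y : gT) :
  [set z^-1 | z in S] = S -> cay_rel G S x y = cay_rel G S y x.
Proof.
move=> Sinv; rewrite /cay_rel -(mem_inv_closed (x * y^-1) Sinv).
by rewrite invMg invgK andbCA.
Qed.

Lemma cay_rel_same_coset (gT : finGroupType) (G K S : {set gT}) (x y : gT) :
  {in S, forall s, s \notin K} -> x * y^-1 \in K -> cay_rel G S x y = false.
Proof. by move=> SK xyK; apply/and3P => -[_ _ /SK]; rewrite xyK. Qed.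

Lemma cay_rel_mulr (gT : finGroupType) (G : {group gT}) (S : {set gT})
    (g x y : gT) :
  g \in G -> cay_rel G S x y -> cay_rel G S (x * g) (y * g).
Proof.
move=> gG /and3P[xG yG xyS].
by rewrite /cay_rel !groupM // invMg mulgA mulgK xyS.
Qed.

Lemma is_cayley_set_sub (gT : finGroupType) (G S : {set gT}) :
  is_cayley_set G S -> S \subset G.
Proof. by case=> /subset_trans -> //; apply: subD1set. Qed.

Section BipartiteCayley.

Variables (gT : finGroupType) (G H : {group gT}) (S : {set gT}).
Hypotheses (cayS : is_cayley_set G S)
           (connS : graph_connected G (cay_rel G S))
           (bipH : bipartition G H (cay_rel G S)).

Lemma bipartite_parity :
  {in G &, forall x y, (x * y^-1 \in H) = ((x \in H) == (y \in H))}.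
Proof.
move=> x y xG yG.
have := bipartition_side_invariant connS bipH
  (fun u v => cay_rel_mulr (groupVr yG)) yG xG.
by rewrite mulgV group1; case: (y \in H); case: (x \in H); case: (x * y^-1 \in H).
Qed.

Lemma bipartite_normal : H <| G.
Proof.
have HG : H \subset G by case: bipH.
have conjH h g : h \in H -> g \in G -> h ^ g \in H.
  move=> hH gG; have hG := subsetP HG h hH.
  by rewrite conjgE mulgA -{2}(invgK g) bipartite_parity ?groupMr ?groupM ?groupV //.
rewrite /normal HG; apply/subsetP => g gG; rewrite inE; apply/subsetP => y.
by rewrite mem_conjg => yH; rewrite -(conjgKV g y) conjH.
Qed.

(* The connection set lies outside H: s is adjacent to 1 \in H. *)
Lemma bipartite_conn_set_out : {in S, forall s, s \notin H}.
Proof.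
move=> s sS; have sG := subsetP (is_cayley_set_sub cayS) s sS.
case: bipH => _ /(_ s 1); rewrite /cay_rel sG invg1 mulg1 sS !group1.
by move=> /(_ isT); case: (s \in H).
Qed.

End BipartiteCayley.

Section SemidirectOrderTwo.

Variables (gT : finGroupType) (G K : {group gT}) (c : gT).
Hypotheses (sdpG : K ><| <[c]> = G) (oc : #[c] = 2).

Lemma sdprod2_normal : K <| G.
Proof. by case: (sdprod_context sdpG). Qed.

Lemma sdprod2_cG : c \in G.
Proof. by case: (sdprod_context sdpG) => _ /subsetP cG _ _ _; apply/cG/cycle_id. Qed.

Lemma sdprod2_cK : c \notin K.
Proof.
case: (sdprod_context sdpG) => _ _ _ _ tiKc; apply/negP => cK.
have : c \in K :&: <[c]> by rewrite inE cK cycle_id.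
by rewrite tiKc inE => /eqP c1; move: oc; rewrite c1 order1.
Qed.

Lemma sdprod2_coset y : y \in G -> y \notin K -> y * c^-1 \in K.
Proof.
case: (sdprod_context sdpG) => _ _ defG _ _; rewrite -defG.
case/mulsgP=> k z kK /cycleP[i ->] ->; rewrite -expg_mod_order oc.
have : (i %% 2 < 2)%N by rewrite ltn_pmod.
case: (i %% 2)%N => [|[|//]] _; first by rewrite expg0 mulg1 kK.
by rewrite expg1 mulgK.
Qed.

Lemma sdprod2_parity :
  {in G &, forall x y, (x * y^-1 \in K) = ((x \in K) == (y \in K))}.
Proof.
move=> x y xG yG; case xK: (x \in K); case yK: (y \in K) => //=.
- by rewrite groupM ?groupV.
- by rewrite groupMl // groupV yK.
- by rewrite groupMr ?groupV // xK.
have := groupM (sdprod2_coset xG (negbT xK)) (groupVr (sdprod2_coset yG (negbT yK))).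
by rewrite invMg invgK mulgA mulgKV.
Qed.

End SemidirectOrderTwo.

Definition twisted_conn_set (gT gT' : finGroupType) (S : {set gT})
    (f : gT -> gT') (a : gT) (c : gT') : {set gT'} :=
  [set f t * c | t in [set s * a^-1 | s in S]].

Definition twist (gT gT' : finGroupType) (H : {set gT}) (f : gT -> gT')
    (a : gT) (c : gT') (u : gT) : gT' :=
  if u \in H then f (u ^ a^-1) ^ c else f (u * a^-1) * c.

Section Twist.

Variables (gT gT' : finGroupType) (G H : {group gT}) (S : {set gT}).
Variables (G' H' : {group gT'}) (c : gT') (f : {morphism H >-> gT'}) (a : gT).
Local Notation phi := (twist H f a c).
Local Notation S' := (twisted_conn_set S f a c).

Hypotheses (cayS : is_cayley_set G S)
           (connS : graph_connected G (cay_rel G S))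
           (bipH : bipartition G H (cay_rel G S))
           (isoH : isom H H' f) (sdpG' : H' ><| <[c]> = G') (oc : #[c] = 2)
           (aGH : a \in G :\: H) (S'inv : [set y^-1 | y in S'] = S').

Let parity := bipartite_parity connS bipH.
Let SG : S \subset G := is_cayley_set_sub cayS.
Let SH : {in S, forall s, s \notin H} := bipartite_conn_set_out cayS bipH.
Let HG : H \subset G. Proof. by case: bipH. Qed.
Let aG : a \in G. Proof. by case/setDP: aGH. Qed.
Let aH : a \notin H. Proof. by case/setDP: aGH. Qed.
Let injf : {in H &, injective f}. Proof. by apply/injmP; case/isomP: isoH. Qed.
Let fH x : x \in H -> f x \in H'.
Proof. by case/isomP: isoH => _ <- xH; rewrite mem_morphim. Qed.
Let cH' : c \notin H'. Proof. exact: sdprod2_cK sdpG' oc. Qed.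
Let cN : c \in 'N(H').
Proof.
by apply: subsetP (sdprod2_cG sdpG'); apply: normal_norm (sdprod2_normal sdpG').
Qed.

Let conjH x g : g \in G -> (x ^ g \in H) = (x \in H).
Proof.
by move=> gG; rewrite memJ_norm // (subsetP (normal_norm (bipartite_normal connS bipH))).
Qed.
Let outH u : u \in G -> u \notin H -> u * a^-1 \in H.
Proof. by move=> uG uH; rewrite parity // (negPf uH) (negPf aH). Qed.

Let fpre y : y \in H' -> exists2 k, k \in H & y = f k.
Proof. by case/isomP: isoH => _ <-; rewrite morphimEdom => /imsetP. Qed.

Lemma twisted_conn_set_mem (t : gT) : t \in H -> (f t * c \in S') = (t * a \in S).
Proof.
move=> tH; apply/imsetP/idP => [[_ /imsetP[s sS ->] /mulIg]|taS].
  have sH := outH (subsetP SG s sS) (SH sS).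
  by move/(injf tH sH) ->; rewrite mulgKV.
by exists t => //; apply/imsetP; exists (t * a); rewrite ?mulgK.
Qed.

(* S' lies in the coset H' c, hence outside H'. *)
Lemma twisted_conn_set_out : {in S', forall y, y \notin H'}.
Proof.
move=> _ /imsetP[_ /imsetP[s sS ->] ->]; rewrite groupMl ?fH //.
exact: outH (subsetP SG s sS) (SH sS).
Qed.

Lemma twist_side (u : gT) : u \in G -> (phi u \in H') = (u \in H).
Proof.
rewrite /twist => uG; case: ifP => uH; first by rewrite memJ_norm // fH // conjH ?groupV.
by rewrite groupMl ?fH ?outH ?uH // (negPf cH').
Qed.

Lemma twist_in (u : gT) : u \in G -> phi u \in G'.
Proof.
move=> uG; have H'G' := normal_sub (sdprod2_normal sdpG').
case uH: (u \in H); first by rewrite (subsetP H'G') // twist_side.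
by rewrite /twist uH groupM ?(sdprod2_cG sdpG') // (subsetP H'G') ?fH ?outH ?uH.
Qed.

Lemma twist_inj : {in G &, injective phi}.
Proof.
move=> u v uG vG E; have sideE : (u \in H) = (v \in H) by rewrite -!twist_side // E.
move: E; rewrite /twist -sideE; case: ifP => uH.
  have vaH : v ^ a^-1 \in H by rewrite conjH ?groupV // -sideE.
  by move/conjg_inj/injf; rewrite conjH ?groupV // => /(_ uH vaH)/conjg_inj.
have vH : v \notin H by rewrite -sideE uH.
by move/mulIg/(injf (outH uG (negbT uH)) (outH vG vH))/mulIg.
Qed.

Lemma twist_onto : phi @: G = G'.
Proof.
apply/setP=> y; apply/imsetP/idP => [[u uG ->]|yG]; first exact: twist_in.
case yH: (y \in H').
  have /fpre[k kH ek] : y ^ c^-1 \in H' by rewrite memJ_norm ?groupV ?yH.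
  have kaH : k ^ a \in H by rewrite conjH.
  exists (k ^ a); first exact: subsetP HG _ kaH.
  by rewrite /twist kaH conjgK -ek conjgKV.
have [k kH ek] := fpre (sdprod2_coset sdpG' oc yG (negbT yH)).
exists (k * a); first by rewrite groupM // (subsetP HG).
by rewrite /twist groupMl // (negPf aH) mulgK -ek mulgKV.
Qed.

(* An edge from the coset H a to H: twist u * (twist v)^-1 = f(u v^-1 a^-1) c. *)
Lemma twist_edge_across (u v : gT) : u \in G -> u \notin H -> v \in H ->
  cay_rel G S u v = cay_rel G' S' (phi u) (phi v).
Proof.
move=> uG uH vH; have vG := subsetP HG v vH.
have vaH : v ^ a^-1 \in H by rewrite conjH ?groupV.
rewrite /cay_rel uG vG !twist_in //= /twist (negPf uH) vH.
rewrite -conjVg -(morphV f vaH) conjgE !mulgA mulgK -morphM ?groupV ?outH //.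
rewrite twisted_conn_set_mem; last by rewrite groupM ?groupV ?outH.
by rewrite -conjVg conjgE invgK !mulgA !mulgKV.
Qed.

(* Twist preserves adjacency: no edges within a side in either graph, and edges
   across are handled by twist_edge_across up to the symmetry of S and S'. *)
Lemma twist_edge : {in G &, forall u v,
  cay_rel G S u v = cay_rel G' S' (phi u) (phi v)}.
Proof.
move=> u v uG vG; case: (boolP ((u \in H) == (v \in H))) => [sameH | diffH].
  rewrite (cay_rel_same_coset _ SH) ?parity // (cay_rel_same_coset _ twisted_conn_set_out) //.
  by rewrite (sdprod2_parity sdpG' oc) ?twist_in ?twist_side.
have [uH | uH] := boolP (u \in H).
  have vH : v \notin H by move: diffH; rewrite uH; case: (v \in H).
  have Sinv : [set y^-1 | y in S] = S by case: cayS.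
  by rewrite cay_relC // [in RHS]cay_relC // twist_edge_across.
have vH : v \in H by move: diffH; rewrite (negPf uH); case: (v \in H).
exact: twist_edge_across.
Qed.

End Twist.

Theorem lemma3p3 (gT gT' : finGroupType) (G H : {group gT}) (S : {set gT})
    (G' H' : {group gT'}) (c : gT') (f : {morphism H >-> gT'}) (a : gT) :
  is_cayley_set G S ->
  graph_connected G (cay_rel G S) ->
  bipartition G H (cay_rel G S) ->
  1 \in H ->
  isom H H' f ->
  H' ><| <[c]> = G' ->
  #[c] = 2 ->
  a \in G :\: H ->
  let Ta := [set s * a^-1 | s in S] in
  let S' := [set f t * c | t in Ta] in
  [set x^-1 | x in S'] = S' ->
  cayley_isomorphic G S G' S'.
Proof.
move=> cayS connS bipH _ isoH sdpG' oc aGH Ta S' S'inv.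
exists (twist H f a c); split.
- exact: twist_inj connS bipH isoH sdpG' oc aGH.
- exact: twist_onto connS bipH isoH sdpG' oc aGH.
- exact: twist_edge cayS connS bipH isoH sdpG' oc aGH S'inv.
Qed.
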